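(* Let $k\ge 1$. Let $\mathcal M^\circ_{2k+1,0}$ (resp. $\mathcal M^\circ_{2k+1,1}$) be the set of elements of $\mathcal M^\circ_{2k+1}$ whose central square $k+1$ is land (resp. water). Then $\mathrm{red}\circ\mathrm{contr}$ restricts to bijections $\mathcal M^\circ_{2k+1,0}\to\mathcal N_k$ and $\mathcal M^\circ_{2k+1,1}\to\mathcal N_{k,1}\cup\{R_{\mathrm{land}}\}$. Consequently $M^\circ_{2k+1} = N_k+N_{k,1}+1 = N_k + N_{k+1,2}$.
   Context: Colorings. Each square is colored water or land. Two distinct squares are adjacent if they share an edge after all edge identifications; a set of squares is connected if its induced adjacency graph is connected (empty set counts as connected). (N1): the water is connected. (N2$\circ$): no interior (non-boundary) vertex of the tiling has all of the squares incident to it water. A $2\times k$ Nurikabe rectangle is a coloring of the $2\times k$ grid (columns $1,\dots,k$ left to right, no identifications) with connected water and no $2\times 2$ block of water squares; $\mathcal N_k$ is the set of these, $N_k=|\mathcal N_k|$; $\mathcal N_{k,i}$ is the subset with exactly $i$ water squares in column $k$, $N_{k,i}=|\mathcal N_{k,i}|$. $R_{\mathrm{land}}\in\mathcal N_k$ is the all-land rectangle. Tile $[0,n]\times[0,1]$ by unit squares $[j-1,j]\times[0,1]$, called square $j$. The $1\times n$ Möbius strip identifies $(x,1)\sim(n-x,0)$ for $x\in[0,n]$; its boundary is the image of the vertical sides. $\mathcal M^\circ_n$ is the set of colorings of the $1\times n$ Möbius strip satisfying (N1) and (N2$\circ$), $M^\circ_n=|\mathcal M^\circ_n|$. Contraction: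 for a coloring of the $1\times(2k+1)$ Möbius strip, $\mathrm{contr}$ gives the coloring of the $1\times 2k$ Möbius strip obtained by deleting square $k+1$, with square $j\le k$ keeping position $j$ and square $j\ge k+2$ moving to position $j-1$. Rectangular reduction: for a coloring of the $1\times 2k$ Möbius strip, $\mathrm{red}$ gives the coloring of the $2\times k$ grid whose column $j$ has top square colored as square $j$ and bottom square colored as square $2k+1-j$. *)

(* Water = true, land = false. Squares are 0-indexed:
   square j (1-indexed, as in the paper) is index j-1. *)
From mathcomp Require Import all_boot.
Set Implicit Arguments. Unset Strict Implicit. Unset Printing Implicit Defensive.

Definition strip (n : nat) := {ffun 'I_n -> bool}.
Definition top : 'I_2 := ord0.
Definition bot : 'I_2 := ord_max.
Definition rect (k : nat) := {ffun 'I_2 * 'I_k -> bool}.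

(* Total accessor: color of the square with (0-based) index i; false (land)
   if i is out of range (only used for convenience). *)
Definition sat n (c : strip n) (i : nat) : bool :=
  if insub i is Some j then c j else false.
Definition rat k (r : rect k) (row : 'I_2) (col : nat) : bool :=
  if insub col is Some j then r (row, j) else false.

Definition connectedb (T : finType) (adj : rel T) (W : pred T) : bool :=
  [forall x, forall y, W x ==> W y ==>
     connect (fun a b => [&& W a, W b & adj a b]) x y].

(* Adjacency on the 1 x n Moebius strip, after the identification
   (x,1) ~ (n-x,0): square j is adjacent to j-1, j+1 (shared vertical edges)
   and to square n+1-j (top edge of j glued to bottom edge of n+1-j);
   in 0-based indices i ~ j iff i <> j and (|i-j| = 1 or i + j = n-1). *)
Definition mob_adj n : rel 'I_n :=
  fun i j => (i != j) && [|| i.+1 == j, j.+1 == i | i + j == n.-1].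

(* Interior vertices of the Moebius strip: the points (x,0) ~ (n-x,1) with
   1 <= x <= n-1; the squares incident to it are (1-indexed) x, x+1, n-x,
   n+1-x, i.e. 0-based x-1, x, n-x-1, n-x. *)
Definition N2o n (c : strip n) : bool :=
  [forall x : 'I_n, (0 < x) ==>
     ~~ [&& sat c x.-1, sat c x, sat c (n - x).-1 & sat c (n - x)]].

Definition N1 n (c : strip n) : bool := connectedb (@mob_adj n) (fun i => c i).

Definition Mo (n : nat) : {set strip n} := [set c : strip n | N1 c && N2o c].

Definition grid_adj k : rel ('I_2 * 'I_k) :=
  fun p q => ((p.1 == q.1) && ((p.2.+1 == q.2 :> nat) || (q.2.+1 == p.2 :> nat)))
          || ((p.2 == q.2) && (p.1 != q.1)).

Definition no_2x2 k (r : rect k) : bool :=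
  [forall j : 'I_k, ~~ [&& rat r top j, rat r bot j, rat r top j.+1 & rat r bot j.+1]].

Definition Nur (k : nat) : {set rect k} :=
  [set r : rect k | connectedb (@grid_adj k) (fun p => r p) && no_2x2 r].

(* \mathcal N_{k,i} : those with exactly i water squares in column k
   (0-based column k-1). *)
Definition NurCol (k i : nat) : {set rect k} :=
  [set r in Nur k | rat r top k.-1 + rat r bot k.-1 == i].

Definition Rland k : rect k := [ffun => false].

(* contr: delete square k+1 (0-based index k) of a 1 x (2k+1) strip. *)
Definition contr k (c : strip k.*2.+1) : strip k.*2 :=
  [ffun j : 'I_k.*2 => sat c (if j < k then j : nat else j.+1)].

(* red: column j (1-indexed) has top square j and bottom square 2k+1-j;
   0-based: column j has top index j and bottom index 2k-1-j. Row 0 = top. *)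
Definition red k (c : strip k.*2) : rect k :=
  [ffun p : 'I_2 * 'I_k =>
     if p.1 == top then sat c p.2 else sat c (k.*2.-1 - p.2)].

Definition redcontr k (c : strip k.*2.+1) : rect k := red (contr c).

Definition Mo0 k : {set strip k.*2.+1} := [set c in Mo k.*2.+1 | ~~ sat c k].
Definition Mo1 k : {set strip k.*2.+1} := [set c in Mo k.*2.+1 | sat c k].

From mathcomp Require Import all_boot zify.
Set Implicit Arguments. Unset Strict Implicit. Unset Printing Implicit Defensive.

(* Folding the strip at its central square k+1 identifies the other 2k squares
   with the cells of the 2 x k grid: Moebius adjacency becomes grid adjacency,
   and the interior vertices of the strip become the 2 x 2 blocks of the grid,
   except the central vertex, whose squares are k, k+1, k+2.  If the central
   square is land, (N1) and (N2o) are exactly the Nurikabe conditions on the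
   folded grid.  If it is water, it touches the grid only in its last column,
   squares k and k+2, which (N2o) forbids to be both water; the water is then
   connected iff the grid water is connected and touches it, or the grid is all
   land.  The same attachment argument, for a water column appended to a 2 x k
   rectangle, gives N_{k,1} + 1 = N_{k+1,2}. *)


Lemma connect_homo (T U : finType) (e : rel T) (e' : rel U) (f : T -> U) :
  (forall a b, e a b -> connect e' (f a) (f b)) ->
  forall x y, connect e x y -> connect e' (f x) (f y).
Proof.
move=> fe x _ /connectP[p p_e ->].
elim: p x p_e => [|b p IHp] a /=; first by rewrite connect0.
by case/andP=> /fe e_ab /IHp; apply: connect_trans.
Qed.

Section InducedConnectivity.
Variables (T : finType) (adj : rel T).
Implicit Types W X : pred T.

Definition induced W : rel T := fun a b => [&& W a, W b & adj a b].

Lemma connectedbP W :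
  reflect (forall x y, W x -> W y -> connect (induced W) x y) (connectedb adj W).
Proof.
apply: (iffP forallP) => [C x y Wx Wy | C x].
  by have /forallP/(_ y) := C x; rewrite Wx Wy.
by apply/forallP => y; apply/implyP => Wx; apply/implyP; apply: C.
Qed.

Lemma eq_connectedb W1 W2 : W1 =1 W2 -> connectedb adj W1 = connectedb adj W2.
Proof.
move=> eW; have eI : induced W1 =2 induced W2 by move=> a b; rewrite /induced !eW.
apply/connectedbP/connectedbP => C x y Wx Wy.
  by rewrite -(eq_connect eI) C ?eW.
by rewrite (eq_connect eI) C -?eW.
Qed.

Lemma sub_connect_induced W1 W2 x y : (forall t, W1 t -> W2 t) ->
  connect (induced W1) x y -> connect (induced W2) x y.
Proof.
move=> W12; apply: connect_sub => a b /and3P[W1a W1b ab].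
by apply: connect1; rewrite /induced !W12.
Qed.

Hypothesis adj_sym : symmetric adj.

Lemma induced_sym W : connect_sym (induced W).
Proof. by apply: sym_connect_sym => a b; rewrite /induced adj_sym andbCA andbA. Qed.

Section Attach.
Variables W X : pred T.
Hypothesis disjoint_XW : forall t, X t -> ~~ W t.
Hypothesis connX : connectedb adj X.

Lemma connectedb_attach u :
  W u -> (exists2 x, X x & adj x u) ->
  (forall x w, X x -> W w -> adj x w -> w = u) ->
  connectedb adj (fun t => X t || W t) = connectedb adj W.
Proof.
move=> Wu [x0 Xx0 x0u] attach; apply/connectedbP/connectedbP => C x y Wx Wy.
  have notX t : W t -> ~~ X t by apply: contraL => /disjoint_XW.
  pose f t := if X t then u else t.
  have fW t : W t -> f t = t by move/notX/negbTE; rewrite /f => ->.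
  rewrite -(fW x Wx) -(fW y Wy); apply: connect_homo (C x y _ _); last 2 first.
  - by rewrite Wx orbT.
  - by rewrite Wy orbT.
  move=> a b /and3P[/orP[Xa|Wa] /orP[Xb|Wb] ab]; rewrite /f ?Xa ?Xb.
  - exact: connect0.
  - by rewrite (negbTE (notX b Wb)) (attach a b) ?connect0.
  - by rewrite adj_sym in ab; rewrite (negbTE (notX a Wa)) (attach b a) ?connect0.
  - by rewrite (negbTE (notX a Wa)) (negbTE (notX b Wb)); apply: connect1; rewrite /induced Wa Wb.
have to_u t : X t || W t -> connect (induced (fun t => X t || W t)) t u.
  case/orP => [Xt|Wt]; last by apply: sub_connect_induced (C t u Wt Wu) => s ->; rewrite orbT.
  apply: (connect_trans (y := x0)).
    by apply: sub_connect_induced (connectedbP _ connX t x0 Xt Xx0) => s ->.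
  by apply: connect1; rewrite /induced Xx0 Wu orbT.
by apply: connect_trans (to_u x Wx) _; rewrite induced_sym; apply: to_u.
Qed.

Lemma connectedb_detached :
  (exists x, X x) -> (forall x w, X x -> W w -> ~~ adj x w) ->
  connectedb adj (fun t => X t || W t) = [forall w, ~~ W w].
Proof.
move=> [x0 Xx0] detached; apply/connectedbP/forallP => [C w | noW x y].
  apply/negP => Ww.
  have closedX : closed (induced (fun t => X t || W t)) X.
    apply: intro_closed; first exact: induced_sym.
    move=> a b /and3P[_ /orP[//|Wb] ab] Xa.
    by move: (detached a b Xa Wb); rewrite ab.
  have Xw : X x0 = X w by apply: closed_connect closedX _ _ (C x0 w _ _); rewrite ?Xx0 ?Ww ?orbT.
  by move: (@disjoint_XW w); rewrite -Xw Xx0 Ww => /(_ isT).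
rewrite (negbTE (noW x)) (negbTE (noW y)) !orbF => Xx Xy.
by apply: sub_connect_induced (connectedbP _ connX x y Xx Xy) => s ->.
Qed.

End Attach.
End InducedConnectivity.

Lemma connectedb_emb (T U : finType) (adjT : rel T) (adjU : rel U) (f : T -> U)
    (WT : pred T) (WU : pred U) :
  injective f -> (forall a b, adjU (f a) (f b) = adjT a b) ->
  (forall y, WU y -> exists x, y = f x) -> (forall x, WU (f x) = WT x) ->
  connectedb adjU WU = connectedb adjT WT.
Proof.
move=> f_inj f_adj f_onto fW; apply/connectedbP/connectedbP => C x y.
  move=> Wx Wy; have /connectP[p] := C (f x) (f y) (etrans (fW x) Wx) (etrans (fW y) Wy).
  elim: p x Wx => [|v p IHp] a Wa /=; first by move=> _ /f_inj ->; apply: connect0.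
  case/andP=> /and3P[_ Wv av]; have [b eb] := f_onto v Wv; subst v.
  rewrite fW in Wv; rewrite f_adj in av.
  move=> /(IHp b Wv) IH /IH; apply: connect_trans; apply: connect1.
  by rewrite /induced Wa Wv av.
move=> Wx Wy; have [a ea] := f_onto x Wx; have [b eb] := f_onto y Wy; subst x y.
rewrite !fW in Wx Wy; apply: connect_homo (C a b Wx Wy) => c d /and3P[Wc Wd cd].
by apply: connect1; rewrite /induced !fW f_adj Wc Wd cd.
Qed.

Lemma rowP (i : 'I_2) : i = top \/ i = bot.
Proof. by case: i => [[|[|//]] ?]; [left|right]; apply/val_inj. Qed.

Lemma grid_adj_sym k : symmetric (@grid_adj k).
Proof.
move=> [a1 a2] [b1 b2]; rewrite /grid_adj /= -!val_eqE /=.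
by case: (rowP a1) => ->; case: (rowP b1) => -> /=; lia.
Qed.

Lemma Rland_eqE k (r : rect k) : (r == Rland k) = [forall p, ~~ r p].
Proof.
apply/eqP/forallP => [-> p | r0]; first by rewrite ffunE.
by apply/ffunP => p; rewrite ffunE; apply/negbTE.
Qed.

(* [X] is a connected set of extra vertices touching the embedded grid exactly
   in its last column: the central square of the Moebius strip, or an appended
   column of a larger grid. *)
Section AttachToLastColumn.
Variables (k : nat) (T : finType) (adj : rel T) (e : 'I_2 * 'I_k.+1 -> T) (X : pred T).
Hypotheses (adj_sym : symmetric adj) (e_inj : injective e)
  (e_adj : forall p q, adj (e p) (e q) = grid_adj p q).
Hypotheses (X_conn : connectedb adj X) (X_e : forall p, ~~ X (e p))
  (e_onto : forall t, ~~ X t -> exists p, t = e p)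
  (X_nbhd : forall x p, X x -> adj x (e p) -> p.2 = ord_max)
  (X_last : forall row, exists2 x, X x & adj x (e (row, ord_max))).

Lemma connectedb_attach_lastcol (r : rect k.+1) (W : pred T) :
  (forall t, X t -> W t) -> (forall p, W (e p) = r p) ->
  ~~ (r (top, ord_max) && r (bot, ord_max)) ->
  connectedb adj W =
    if r (top, ord_max) || r (bot, ord_max) then connectedb (@grid_adj k.+1) (fun p => r p)
    else r == Rland k.+1.
Proof.
move=> XW We not_both; pose W0 t := ~~ X t && W t.
have -> : connectedb adj W = connectedb adj (fun t => X t || W0 t).
  by apply: eq_connectedb => t; rewrite /W0; case: (boolP (X t)) => // /XW ->.
have W0e p : W0 (e p) = r p by rewrite /W0 X_e We.
have disj t : X t -> ~~ W0 t by rewrite /W0 => ->.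
have W0_last x w : X x -> W0 w -> adj x w ->
    exists2 row, w = e (row, ord_max) & r (row, ord_max).
  move=> Xx W0w xw; have [p ew] := e_onto (andP W0w).1; subst w.
  move: (X_nbhd Xx xw) W0w; clear xw; case: p => row j /= ->; rewrite W0e; by exists row.
have attached row : r (row, ord_max) -> (forall i, r (i, ord_max) -> i = row) ->
    connectedb adj (fun t => X t || W0 t) = connectedb (@grid_adj k.+1) (fun p => r p).
  move=> r_row only_row.
  rewrite (connectedb_attach adj_sym disj X_conn (u := e (row, ord_max))) ?W0e //.
  - exact: connectedb_emb e_inj e_adj (fun t W0t => e_onto (andP W0t).1) W0e.
  - move=> x w Xx W0w xw; have [i -> r_i] := W0_last x w Xx W0w xw.
    by rewrite (only_row i r_i).
move: not_both; case: (boolP (r (top, ord_max))) => a;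
  case: (boolP (r (bot, ord_max))) => b //= _.
- by apply: attached a _ => i; case: (rowP i) => -> //; rewrite (negbTE b).
- by apply: attached b _ => i; case: (rowP i) => -> //; rewrite (negbTE a).
have [x0 Xx0 _] := X_last top.
rewrite (connectedb_detached adj_sym disj X_conn) ?Rland_eqE; last 2 first.
- by exists x0.
- move=> x w Xx W0w; apply/negP => xw; have [i _] := W0_last x w Xx W0w xw.
  by case: (rowP i) => ->; apply/negP.
apply/forallP/forallP => [noW0 p | nor t]; first by rewrite -W0e.
by case: (boolP (X t)) => [/disj // | /e_onto [p ->]]; rewrite W0e.
Qed.

End AttachToLastColumn.

Lemma sat_val n (c : strip n) (i : 'I_n) : sat c i = c i.
Proof. by rewrite /sat valK. Qed.

Lemma rat_val k (r : rect k) row (j : 'I_k) : rat r row j = r (row, j).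
Proof. by rewrite /rat valK. Qed.

Lemma rat_out k (r : rect k) row j : k <= j -> rat r row j = false.
Proof. by move=> kj; rewrite /rat insubF // ltnNge kj. Qed.

Lemma rat_last k (r : rect k.+1) row : rat r row k = r (row, ord_max).
Proof. exact: (rat_val r row ord_max). Qed.

Lemma mob_adj_sym n : symmetric (@mob_adj n).
Proof. by move=> i j; rewrite /mob_adj eq_sym; congr (_ && _); lia. Qed.

Section Folding.
Variable k : nat.

Definition center : 'I_k.*2.+1 := inord k.

(* The strip square that red \o contr shows at cell p (0-based); bottom cells
   are shifted by one because the central square k was deleted. *)
Definition strip_pos (p : 'I_2 * 'I_k) : 'I_k.*2.+1 :=
  inord (if p.1 == top then p.2 : nat else k.*2 - p.2).

Lemma centerE : center = k :> nat.
Proof. by rewrite inordK //; lia. Qed.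

Lemma strip_posE p : strip_pos p = (if p.1 == top then p.2 : nat else k.*2 - p.2) :> nat.
Proof. by rewrite inordK //; case: p => i j /=; have := ltn_ord j; case: ifP => _; lia. Qed.

Lemma sat_center (c : strip k.*2.+1) : sat c k = c center.
Proof. by rewrite -sat_val centerE. Qed.

Lemma redcontr_sat (c : strip k.*2.+1) p :
  redcontr c p = sat c (if p.1 == top then p.2 : nat else k.*2 - p.2).
Proof.
have sat_contr m : sat (contr c) m = (m < k.*2) && sat c (if m < k then m else m.+1).
  by rewrite /sat; case: insubP => [j _ <-|/negbTE -> //]; rewrite ffunE ltn_ord.
rewrite /redcontr /red ffunE !sat_contr; case: p => i j /=; have := ltn_ord j.
case: ifP => _ jk; first by rewrite jk (_ : j < k.*2); lia.
rewrite ifF; last by lia.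
by rewrite (_ : _ < k.*2) /=; [congr (sat c _) | ]; lia.
Qed.

Lemma redcontr_pos (c : strip k.*2.+1) p : redcontr c p = c (strip_pos p).
Proof. by rewrite -sat_val strip_posE redcontr_sat. Qed.

Lemma rat_redcontr (c : strip k.*2.+1) row j :
  rat (redcontr c) row j = (j < k) && sat c (if row == top then j else k.*2 - j).
Proof.
by rewrite /rat; case: insubP => [i _ <-|/negbTE -> //]; rewrite ltn_ord redcontr_sat.
Qed.

Lemma strip_pos_inj : injective strip_pos.
Proof.
move=> [i1 j1] [i2 j2] /(congr1 (@nat_of_ord _)); rewrite !strip_posE /=.
have := ltn_ord j1; have := ltn_ord j2.
case: (rowP i1) => ->; case: (rowP i2) => -> /= lt2 lt1 ej;
  first [by congr (_, _); apply/val_inj => /=; lia | exfalso; lia].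
Qed.

Lemma strip_pos_adj p q : mob_adj (strip_pos p) (strip_pos q) = grid_adj p q.
Proof.
move: p q => [i1 j1] [i2 j2]; rewrite /mob_adj /grid_adj -!val_eqE /= !strip_posE /=.
have := ltn_ord j1; have := ltn_ord j2.
by case: (rowP i1) => ->; case: (rowP i2) => -> //=; lia.
Qed.

Lemma strip_pos_neq_center p : strip_pos p != center.
Proof.
rewrite -val_eqE /= strip_posE centerE; case: p => i j /=.
by have := ltn_ord j; case: ifP => _; lia.
Qed.

Lemma strip_posP x : x != center -> exists p, x = strip_pos p.
Proof.
rewrite -val_eqE /= centerE => xk; have := ltn_ord x; case: (ltnP x k) => [xk' _ | kx xn].
  by exists (top, Ordinal xk'); apply/val_inj => /=; rewrite strip_posE.
have jk : k.*2 - x < k by lia.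
by exists (bot, Ordinal jk); apply/val_inj => /=; rewrite strip_posE /=; lia.
Qed.

End Folding.

Definition expand k (r : rect k) (b : bool) : strip k.*2.+1 :=
  [ffun i => if [pick p | strip_pos p == i] is Some p then r p else b].

Lemma redcontr_expand k (r : rect k) b : redcontr (expand r b) = r.
Proof.
apply/ffunP => p; rewrite redcontr_pos ffunE.
by case: pickP => [q /eqP/strip_pos_inj -> // | /(_ p)]; rewrite eqxx.
Qed.

Lemma expand_center k (r : rect k) b : expand r b (center k) = b.
Proof.
rewrite ffunE; case: pickP => // p /eqP epc.
by have := strip_pos_neq_center p; rewrite epc eqxx.
Qed.

Definition fiber k (b : bool) (B : {set rect k}) : {set strip k.*2.+1} :=
  [set c | (sat c k == b) && (redcontr c \in B)].

Lemma redcontr_fiber k b (B : {set rect k}) :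
  {in fiber b B &, injective (@redcontr k)} /\ @redcontr k @: fiber b B = B.
Proof.
split.
  move=> c1 c2; rewrite !inE => /andP[/eqP c1k _] /andP[/eqP c2k _] e12.
  apply/ffunP => x; have [-> | /strip_posP[p ->]] := eqVneq x (center k).
    by rewrite -!sat_center c1k c2k.
  by rewrite -!redcontr_pos e12.
apply/setP => r; apply/imsetP/idP => [[c] | rB].
  by rewrite inE => /andP[_ ?] ->.
exists (expand r b); last by rewrite redcontr_expand.
by rewrite inE sat_center expand_center redcontr_expand eqxx rB.
Qed.

Lemma center_adj k p : mob_adj (center k.+1) (strip_pos p) = (p.2 == ord_max).
Proof.
rewrite /mob_adj -!val_eqE /= centerE strip_posE; case: p => i j /=.
by have := ltn_ord j; case: (rowP i) => -> /=; lia.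
Qed.

Lemma N1_land k (c : strip k.*2.+1) :
  ~~ sat c k -> N1 c = connectedb (@grid_adj k) (fun p => redcontr c p).
Proof.
rewrite sat_center => ck; apply: connectedb_emb (@strip_pos_inj k) (@strip_pos_adj k) _ _.
  by move=> x cx; apply: strip_posP; apply: contraNneq ck => <-.
by move=> p; rewrite redcontr_pos.
Qed.

Lemma N1_water k (c : strip (k.+1).*2.+1) : sat c k.+1 ->
  ~~ (redcontr c (top, ord_max) && redcontr c (bot, ord_max)) ->
  N1 c = if redcontr c (top, ord_max) || redcontr c (bot, ord_max)
         then connectedb (@grid_adj k.+1) (fun p => redcontr c p)
         else redcontr c == Rland k.+1.
Proof.
rewrite sat_center /N1 => ck.
apply: (@connectedb_attach_lastcol _ _ _ _ (xpred1 (center k.+1)) (@mob_adj_sym _)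
          (@strip_pos_inj _) (@strip_pos_adj _) _ _ _ _ _ (redcontr c) (fun i => c i))
  => [|p|t|x p|row|t|p].
- by apply/connectedbP => x y /eqP-> /eqP->; apply: connect0.
- exact: strip_pos_neq_center.
- exact: strip_posP.
- by move=> /eqP->; rewrite center_adj => /eqP.
- by exists (center k.+1); rewrite ?center_adj.
- by move=> /eqP->.
- by rewrite redcontr_pos.
Qed.



Definition water_vertex n (c : strip n) (x : nat) :=
  [&& sat c x.-1, sat c x, sat c (n - x).-1 & sat c (n - x)].

Lemma N2oP n (c : strip n) :
  reflect (forall x, 0 < x < n -> ~~ water_vertex c x) (N2o c).
Proof.
apply: (iffP forallP) => [H x /andP[x0 xn] | H x].
  exact: implyP (H (Ordinal xn)) x0.
by apply/implyP => x0; apply: H; rewrite x0 ltn_ord.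
Qed.

Lemma water_vertex_sym n (c : strip n) x :
  x <= n -> water_vertex c (n - x) = water_vertex c x.
Proof. by move=> xn; rewrite /water_vertex subKn // andbA [RHS]andbA andbC. Qed.

Definition water_block k (r : rect k) (j : nat) :=
  [&& rat r top j, rat r bot j, rat r top j.+1 & rat r bot j.+1].

Lemma no_2x2P k (r : rect k) :
  reflect (forall j, j.+1 < k -> ~~ water_block r j) (no_2x2 r).
Proof.
apply: (iffP forallP) => [H j jk | H j]; first exact: (H (Ordinal (ltnW jk))).
have [/H // | kj] := ltnP j.+1 k.
by rewrite /water_block (rat_out r top kj) !andbF.
Qed.

Lemma water_block_redcontr k (c : strip (k.+1).*2.+1) j :
  j < k -> water_block (redcontr c) j = water_vertex c j.+1.
Proof.
move=> jk; rewrite /water_block /water_vertex !rat_redcontr /= !ltnS jk (ltnW jk) /=.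
by rewrite subSS -subnS; congr (_ && _); rewrite andbC -andbA.
Qed.

Lemma redcontr_last k (c : strip (k.+1).*2.+1) :
  redcontr c (top, ord_max) = sat c k /\ redcontr c (bot, ord_max) = sat c k.+2.
Proof. by rewrite !redcontr_sat /=; split; congr (sat c _); lia. Qed.

Lemma N2o_redcontr k (c : strip (k.+1).*2.+1) :
  N2o c = no_2x2 (redcontr c) &&
          ~~ [&& redcontr c (top, ord_max), sat c k.+1 & redcontr c (bot, ord_max)].
Proof.
have center_vertex : water_vertex c k.+1 =
    [&& redcontr c (top, ord_max), sat c k.+1 & redcontr c (bot, ord_max)].
  have [-> ->] := redcontr_last c.
  rewrite /water_vertex /= (_ : _ - k.+1 = k.+2); last by lia.
  by congr (_ && _); rewrite /= andbA andbb.
rewrite -center_vertex; apply/N2oP/andP => [H | [/no_2x2P H1 H2] x /andP[x0 xn]].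
  split; last by apply: H; lia.
  by apply/no_2x2P => j jk; rewrite water_block_redcontr //; apply: H; lia.
wlog xk : x x0 xn / x <= k.+1 => [IH|].
  have [|kx] := leqP x k.+1; first exact: IH.
  by rewrite -water_vertex_sym ?(ltnW xn) //; apply: IH; lia.
have [xlt|kx] := ltnP x k.+1; last by rewrite (_ : x = k.+1) //; lia.
by rewrite -(prednK x0) -water_block_redcontr; [apply: H1 | ]; lia.
Qed.

Lemma Mo0_fiber k : Mo0 k.+1 = fiber false (Nur k.+1).
Proof.
apply/setP => c; rewrite !inE N2o_redcontr.
have [ck|ck] := boolP (sat c k.+1); first by rewrite !andbF.
by rewrite N1_land //= !andbF !andbT.
Qed.

Lemma rat_Rland k row j : rat (Rland k) row j = false.
Proof. by rewrite /rat; case: insub => // i; rewrite ffunE. Qed.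

Lemma no_2x2_Rland k : no_2x2 (Rland k).
Proof. by apply/no_2x2P => j _; rewrite /water_block !rat_Rland. Qed.

Lemma mem_NurCol1_Rland k (r : rect k.+1) :
  (r \in NurCol k.+1 1 :|: [set Rland k.+1]) =
  [&& no_2x2 r, ~~ (r (top, ord_max) && r (bot, ord_max))
    & if r (top, ord_max) || r (bot, ord_max)
      then connectedb (@grid_adj k.+1) (fun p => r p) else r == Rland k.+1].
Proof.
rewrite !inE /= !rat_last.
have notR row : r (row, ord_max) -> (r == Rland k.+1) = false.
  by move=> h; apply: contraTF h => /eqP->; rewrite ffunE.
case: (boolP (r (top, ord_max))) => a; case: (boolP (r (bot, ord_max))) => b /=;
  rewrite ?(notR _ a) ?(notR _ b) ?orbF ?andbF ?andbT 1?andbC //.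
by case: eqP => // ->; rewrite no_2x2_Rland.
Qed.

Lemma Mo1_fiber k :
  Mo1 k.+1 = fiber true (NurCol k.+1 1 :|: [set Rland k.+1]).
Proof.
apply/setP => c; rewrite inE [in RHS]inE mem_NurCol1_Rland !inE N2o_redcontr.
have [ck|ck] := boolP (sat c k.+1); last by rewrite !andbF.
have [ab|nab] := boolP (redcontr c (top, ord_max) && redcontr c (bot, ord_max)).
  by rewrite !andbF.
by rewrite N1_water //= !andbT andbC.
Qed.

Lemma card_Mo_split k : #|Mo k.*2.+1| = #|Mo0 k| + #|Mo1 k|.
Proof.
rewrite -(cardsID [set c | sat c k] (Mo _)) addnC.
by congr (_ + _); apply: eq_card => c; rewrite !inE // andbC.
Qed.

Section AppendColumn.
Variable k : nat.

Lemma bump_max (j : 'I_k.+1) : bump k.+1 j = j.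
Proof. by rewrite /bump leqNgt ltn_ord. Qed.

Definition lift_cell (p : 'I_2 * 'I_k.+1) : 'I_2 * 'I_k.+2 := (p.1, lift ord_max p.2).

Definition restrict (r : rect k.+2) : rect k.+1 := [ffun p => r (lift_cell p)].

Definition extend (r : rect k.+1) : rect k.+2 :=
  [ffun p => if unlift ord_max p.2 is Some j then r (p.1, j) else true].

Lemma extend_lift_cell (r : rect k.+1) p : extend r (lift_cell p) = r p.
Proof. by case: p => i j; rewrite ffunE /= liftK. Qed.

Lemma extend_last (r : rect k.+1) row : extend r (row, ord_max) = true.
Proof. by rewrite ffunE /= unlift_none. Qed.

Lemma restrict_extend : cancel extend restrict.
Proof. by move=> r; apply/ffunP => p; rewrite ffunE extend_lift_cell. Qed.

Lemma extend_restrict (r : rect k.+2) : r (top, ord_max) -> r (bot, ord_max) -> extend (restrict r) = r.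
Proof.
move=> rt rb; apply/ffunP => [[i j]]; rewrite !ffunE /=.
by case: unliftP => [j' -> | ->]; [rewrite ffunE | case: (rowP i) => ->].
Qed.

Lemma rat_extend (r : rect k.+1) row j : j < k.+1 -> rat (extend r) row j = rat r row j.
Proof.
move=> jk; rewrite (rat_val r row (Ordinal jk)).
have -> : rat (extend r) row j = rat (extend r) row (lift ord_max (Ordinal jk)).
  by rewrite lift_max.
by rewrite rat_val; exact: (extend_lift_cell r (row, Ordinal jk)).
Qed.

Lemma no_2x2_extend (r : rect k.+1) :
  no_2x2 (extend r) = no_2x2 r && ~~ (r (top, ord_max) && r (bot, ord_max)).
Proof.
have block j : j < k -> water_block (extend r) j = water_block r j.
  by move=> jk; rewrite /water_block !rat_extend //; lia.
have block_last : water_block (extend r) k = r (top, ord_max) && r (bot, ord_max).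
  by rewrite /water_block !(rat_extend _ _ (ltnSn k)) !rat_last !extend_last !andbT.
apply/no_2x2P/andP => [H | [/no_2x2P H1 H2] j jk].
  split; last by rewrite -block_last H.
  by apply/no_2x2P => j jk; rewrite -block //; apply: H; lia.
have [jk'|kj] := ltnP j k; first by rewrite block // H1.
by rewrite (_ : j = k) ?block_last //; lia.
Qed.

Lemma lastcol_adj row p :
  grid_adj (row, ord_max) (lift_cell p) = (p == (row, ord_max)).
Proof.
case: p => i j; rewrite /grid_adj /lift_cell xpair_eqE -!val_eqE /= bump_max.
by have := ltn_ord j; rewrite eq_sym; case: (row == i) => /=; lia.
Qed.

Lemma connectedb_extend (r : rect k.+1) : ~~ (r (top, ord_max) && r (bot, ord_max)) ->
  connectedb (@grid_adj k.+2) (fun p => extend r p) =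
    if r (top, ord_max) || r (bot, ord_max)
    then connectedb (@grid_adj k.+1) (fun p => r p) else r == Rland k.+1.
Proof.
apply: (@connectedb_attach_lastcol _ _ _ lift_cell (fun p => p.2 == ord_max) (@grid_adj_sym _)
          _ _ _ _ _ _ _ r (fun p => extend r p)) => [|p q| |p|[i j]|[i j] p|row|[i j] /= /eqP->|p].
- by move=> [i1 j1] [i2 j2] /eqP; rewrite xpair_eqE /= => /andP[/eqP-> /eqP/lift_inj->].
- by case: p q => [i1 j1] [i2 j2]; rewrite /grid_adj /= -!val_eqE /= !bump_max.
- apply/connectedbP => [[i1 j1] [i2 j2]] /= /eqP-> /eqP->.
  have [-> | ne] := eqVneq i1 i2; first exact: connect0.
  by apply: connect1; rewrite /induced /grid_adj /= !eqxx ne orbT.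
- by rewrite eq_sym neq_lift.
- by rewrite /=; case: (unliftP ord_max j) => [j' -> | ->]; [exists (i, j') | rewrite eqxx].
- by move=> /= /eqP->; rewrite lastcol_adj => /eqP->.
- by exists (row, ord_max); rewrite ?lastcol_adj.
- exact: extend_last.
- exact: extend_lift_cell.
Qed.

Lemma extend_NurCol2 (r : rect k.+1) :
  (extend r \in NurCol k.+2 2) = (r \in NurCol k.+1 1 :|: [set Rland k.+1]).
Proof.
rewrite mem_NurCol1_Rland !inE /= !rat_last !extend_last /= andbT no_2x2_extend.
have [ab|nab] := boolP (r (top, ord_max) && r (bot, ord_max)); first by rewrite !andbF.
by rewrite connectedb_extend // andbT andbC.
Qed.

End AppendColumn.

Lemma card_NurCol2 k : #|NurCol k.+2 2| = #|NurCol k.+1 1 :|: [set Rland k.+1]|.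
Proof.
have -> : NurCol k.+2 2 = @extend k @: (NurCol k.+1 1 :|: [set Rland k.+1]).
  apply/setP => r; apply/idP/imsetP => [rN | [r' r'N ->]]; last by rewrite extend_NurCol2.
  have [rt rb] : r (top, ord_max) /\ r (bot, ord_max).
    by move: rN; rewrite inE /= !rat_last => /andP[_]; case: (r (top, _)); case: (r (bot, _)).
  by exists (restrict r); rewrite -?extend_NurCol2 extend_restrict.
exact/card_imset/can_inj/restrict_extend.
Qed.

Lemma card_NurCol1_Rland k : #|NurCol k.+1 1 :|: [set Rland k.+1]| = #|NurCol k.+1 1| + 1.
Proof. by rewrite setUC cardsU1 inE /= !rat_Rland andbF addnC. Qed.

Theorem lemma5p2 (k : nat) (hk : 1 <= k) :
  ({in Mo0 k &, injective (@redcontr k)} /\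
   (@redcontr k) @: Mo0 k = Nur k) /\
  ({in Mo1 k &, injective (@redcontr k)} /\
   (@redcontr k) @: Mo1 k = NurCol k 1 :|: [set Rland k]) /\
  (#|Mo k.*2.+1| = #|Nur k| + #|NurCol k 1| + 1 /\
   #|Mo k.*2.+1| = #|Nur k| + #|NurCol k.+1 2|).
Proof.
case: k hk => [//|k] _.
have [inj0 im0] := redcontr_fiber false (Nur k.+1).
have [inj1 im1] := redcontr_fiber true (NurCol k.+1 1 :|: [set Rland k.+1]).
rewrite -Mo0_fiber in inj0 im0; rewrite -Mo1_fiber in inj1 im1.
have card_Mo_k : #|Mo (k.+1).*2.+1| = #|Nur k.+1| + #|NurCol k.+1 1 :|: [set Rland k.+1]|.
  by rewrite card_Mo_split -(card_in_imset inj0) -(card_in_imset inj1) im0 im1.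
by do !split => //; rewrite card_Mo_k ?card_NurCol2 card_NurCol1_Rland addnA.
Qed.
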